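(* Let $\alpha$ and $\beta$ be positive reals with $3\alpha < \beta$. Let $n$ be a positive integer, let $\sqrt{\log n/n} \ll p = p(n) \le 1$ and let $D \in \mathcal{D}(n,p)$. Then a.a.s. the following holds for every nonempty $S \subseteq [n]$ of size $s \le \alpha n$ and every set $T$ of $s$ ordered pairs (arcs) with both endpoints in $[n]\setminus S$ which span a digraph with maximum out-degree one and maximum in-degree one: there are fewer than $\beta s p^2 n$ pairs $((x,y),z) \in T \times S$ such that $(x,z) \in E(D)$ and $(z,y) \in E(D)$.
   Context: $\mathcal{D}(n,p)$ is the random digraph on $[n]$ where each ordered pair $(u,v)$, $u\ne v$, is an arc independently with probability $p$; $E(D)$ is its arc set. a.a.s. means with probability tending to $1$ as $n\to\infty$; $f \ll g$ means $f/g\to0$; $\log$ is natural. *)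

From mathcomp Require Import all_boot all_order all_algebra.
From mathcomp Require Import all_classical all_reals all_analysis.
Import Order.TTheory GRing.Theory Num.Theory.

Set Implicit Arguments.
Unset Strict Implicit.
Unset Printing Implicit Defensive.

Local Open Scope ring_scope.

(* A digraph on [n] (vertices 'I_n) is given by its arc set, a set of
   ordered pairs (u,v) with u <> v. *)
Definition loopless (n : nat) (E : {set 'I_n * 'I_n}) : bool :=
  [forall a in E, a.1 != a.2].

(* Probability, in the random digraph D(n,p), that the arc set satisfies Q:
   each of the n(n-1) ordered pairs (u,v), u <> v, is an arc independently
   with probability p. *)
Definition Dnp_prob {R : realType} (n : nat) (p : R)
    (Q : {set 'I_n * 'I_n} -> Prop) : R :=
  \sum_(E : {set 'I_n * 'I_n} | loopless E && `[< Q E >])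
     p ^+ #|E| * (1 - p) ^+ (n * n.-1 - #|E|)%N.

Definition lemma4p3_prop {R : realType} (alpha beta p : R) (n : nat)
    (E : {set 'I_n * 'I_n}) : Prop :=
  forall (S : {set 'I_n}) (T : {set 'I_n * 'I_n}),
    S != finset.set0 ->
    (#|S|%:R <= alpha * n%:R) ->
    #|T| = #|S| ->
    (forall a, a \in T -> [/\ a.1 \notin S, a.2 \notin S & a.1 != a.2]) ->
    (forall x : 'I_n, (#|[set a in T | a.1 == x]| <= 1)%N) ->
    (forall y : 'I_n, (#|[set a in T | a.2 == y]| <= 1)%N) ->
    #|[set az : ('I_n * 'I_n) * 'I_n |
         [&& az.1 \in T, az.2 \in S,
             (az.1.1, az.2) \in E & (az.2, az.1.2) \in E]]|%:R
      < beta * #|S|%:R * p ^+ 2 * n%:R.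

Arguments Dnp_prob {R} n p Q.
Arguments lemma4p3_prop {R} alpha beta p n E.

(* First moment method.  Fix (S,T) with |S| = |T| = s and let
   k = floor(beta s p^2 n).  The 2k arcs of any k cherries are distinct,
   because T has in- and out-degree at most one and avoids S, so at least k
   cherries occur with probability at most C(s^2, k) p^(2k)
   <= 3 (3 alpha / beta)^k, using s <= alpha n and k! >= (k+1)^k / 3^(k+1).
   Since 3 alpha < beta and p^2 n >> log n, this is at most C n^(-6s), which
   beats the at most n^(3s) choices of (S,T); summing over s >= 1 the failure
   probability is O(1/n^2). *)

From mathcomp Require Import all_boot all_order all_algebra.
From mathcomp Require Import all_classical all_reals all_analysis.
From mathcomp Require Import ring lra zify.
Import Order.TTheory GRing.Theory Num.Theory numFieldNormedType.Exports.
Set Implicit Arguments.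
Unset Strict Implicit.
Unset Printing Implicit Defensive.

Local Open Scope ring_scope.
Local Notation subsetP := fintype.subsetP.

Section ElementaryBounds.
Variable R : realType.

Lemma expR1_lt3 : expR (1 : R) < 3.
Proof.
have expRN6 : expR (- (6:R)^-1) >= 1 - (6:R)^-1.
  by rewrite -[1 - _]/(1 + - _) expR_ge1Dx.
have expR6 : expR ((6:R)^-1) <= 6 / 5.
  have e := expRxMexpNx_1 ((6:R)^-1).
  have hp := expR_gt0 ((6:R)^-1).
  move: expRN6 e hp; set a := expR _; set b := expR _ => h1 e hp.
  rewrite -div1r in h1; nra.
have -> : (1 : R) = 6%:R * (6:R)^-1 by rewrite divff.
rewrite expRM_natl; apply: (le_lt_trans (y := (6/5 : R) ^+ 6)).
  by apply: lerXn2r => //; rewrite ?nnegrE ?expR_ge0.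
by rewrite !exprS expr0; lra.
Qed.

Lemma expr_1Dinv_le3 (m : nat) : (0 < m)%N -> (1 + (m%:R : R)^-1) ^+ m <= 3.
Proof.
move=> m0; have hm : (0 : R) < m%:R by rewrite ltr0n.
apply: (le_trans (y := expR (m%:R^-1) ^+ m)).
  by apply: lerXn2r; rewrite ?nnegrE ?expR_ge0 ?expR_ge1Dx.
by rewrite -expRM_natl mulfV ?gt_eqF // ltW // expR1_lt3.
Qed.

Lemma natrS_expr_le3 (k : nat) : (k.+1%:R : R) ^+ k <= 3 * k%:R ^+ k.
Proof.
case: k => [|k]; first by rewrite !expr0; lra.
have hk : (0 : R) < k.+1%:R by rewrite ltr0n.
have -> : (k.+2%:R : R) = k.+1%:R * (1 + k.+1%:R^-1).
  by rewrite mulrDr mulr1 mulfV ?gt_eqF // -natr1.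
by rewrite exprMn mulrC ler_wpM2r // expr_1Dinv_le3.
Qed.

Lemma natr_expr_le_fact (k : nat) : (k%:R : R) ^+ k <= 3 ^+ k * (k`!)%:R.
Proof.
elim: k => [|k IH]; first by rewrite !expr0 mul1r.
rewrite exprS factS natrM.
apply: (le_trans (y := k.+1%:R * (3 * k%:R ^+ k))).
  exact/ler_wpM2l/natrS_expr_le3.
rewrite exprS mulrCA -mulrA; apply: ler_wpM2l => //.
by rewrite mulrCA; exact: ler_wpM2l.
Qed.

Lemma natrS_expr_le_fact (k : nat) : (k.+1%:R : R) ^+ k <= 3 ^+ k.+1 * (k`!)%:R.
Proof.
apply: (le_trans (natrS_expr_le3 k)).
by rewrite exprS -mulrA ler_wpM2l // natr_expr_le_fact.
Qed.

Lemma ffact_leq_expn (m k : nat) : (m ^_ k <= m ^ k)%N.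
Proof.
elim: k m => [|k IH] m //.
rewrite ffactnS expnS leq_mul2l; apply/orP; right.
apply: (leq_trans (IH m.-1)); have [->|kp] := posnP k; first by rewrite !expn0.
by rewrite leq_exp2r // leq_pred.
Qed.

Lemma bin_le_expr_fact (m k : nat) : ('C(m, k)%:R : R) <= m%:R ^+ k / (k`!)%:R.
Proof.
rewrite ler_pdivlMr ?ltr0n ?fact_gt0 // -natrM bin_ffact -natrX ler_nat.
exact: ffact_leq_expn.
Qed.

End ElementaryBounds.

Lemma sum_subset_binom (R : realType) (T : finType) (B : {set T}) (x y : R) :
  \sum_(F : {set T} | F \subset B) x ^+ #|F| * y ^+ (#|B| - #|F|) = (x + y) ^+ #|B|.
Proof.
rewrite (partition_big (fun F : {set T} => (inord #|F| : 'I_(#|B|).+1)) xpredT) //=.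
rewrite addrC exprDn; apply: eq_bigr => -[i Hi] _.
have E (F : {set T}) : (F \subset B) && (inord #|F| == Ordinal Hi :> 'I_(#|B|).+1)
   = (F \in [set A : {set T} | A \subset B & #|A| == i]).
  rewrite inE; case FB: (F \subset B) => //=.
  have hF : (#|F| < #|B|.+1)%N by rewrite ltnS subset_leq_card.
  apply/eqP/eqP => [h|h]; first by have := congr1 val h; rewrite /= inordK.
  by apply: val_inj; rewrite /= inordK // h.
rewrite (eq_bigl _ _ E) (eq_bigr (fun _ => x ^+ i * y ^+ (#|B| - i))); last first.
  by move=> F; rewrite inE => /andP[_ /eqP ->].
by rewrite sumr_const cards_draws mulrC.
Qed.

Lemma sum_le_subpred (R : realType) (I : finType) (P Q : pred I) (f g : I -> R) :
  (forall i, P i -> Q i) -> (forall i, P i -> f i <= g i) ->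
  (forall i, Q i -> 0 <= g i) ->
  \sum_(i | P i) f i <= \sum_(i | Q i) g i.
Proof.
move=> PQ fg g0; rewrite [X in X <= _]big_mkcond [X in _ <= X]big_mkcond.
apply: ler_sum => i _; case Pi: (P i); first by rewrite PQ // fg.
by case: (Q i) (g0 i) => // ->.
Qed.

Definition offdiag n := [set a : 'I_n * 'I_n | a.1 != a.2].

Lemma looplessE n (E : {set 'I_n * 'I_n}) : loopless E = (E \subset offdiag n).
Proof.
apply/idP/idP => [/forall_inP h|/subsetP h].
  by apply/subsetP => a aE; rewrite inE h.
by apply/forall_inP => a aE; have := h a aE; rewrite inE.
Qed.

Lemma card_offdiag n : #|offdiag n| = (n * n.-1)%N.
Proof.
have card_diag : #|[set a : 'I_n * 'I_n | a.1 == a.2]| = n.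
  have -> : [set a : 'I_n * 'I_n | a.1 == a.2] = [set (x, x) | x : 'I_n].
    apply/setP => -[a b]; rewrite inE /=.
    by apply/eqP/imsetP => [->|[x _ [-> ->]]] //; exists b.
  by rewrite card_imset ?card_ord // => x y [].
have := cardsC [set a : 'I_n * 'I_n | a.1 == a.2].
rewrite card_diag card_prod card_ord.
have -> : ~: [set a : 'I_n * 'I_n | a.1 == a.2] = offdiag n.
  by apply/setP => a; rewrite !inE.
move=> h; rewrite -subn1 mulnBr muln1 -h; lia.
Qed.

Section ArcWeight.
Variables (R : realType) (n : nat) (q : R).

Definition arc_weight (E : {set 'I_n * 'I_n}) : R :=
  q ^+ #|E| * (1 - q) ^+ (n * n.-1 - #|E|).

Lemma arc_weight_ge0 E : 0 <= q <= 1 -> 0 <= arc_weight E.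
Proof.
by case/andP => q0 q1; rewrite /arc_weight mulr_ge0 // exprn_ge0 // subr_ge0.
Qed.

Lemma sum_arc_weight_supset (A : {set 'I_n * 'I_n}) : A \subset offdiag n ->
  \sum_(E | loopless E && (A \subset E)) arc_weight E = q ^+ #|A|.
Proof.
move=> AO.
rewrite (reindex_onto (fun F => A :|: F) (fun E => E :\: A)); last first.
  move=> E /andP[_ AE]; apply/setP => x; rewrite !inE.
  by case xA: (x \in A) => //=; rewrite (subsetP AE).
transitivity (\sum_(F : {set 'I_n * 'I_n} | F \subset offdiag n :\: A)
                arc_weight (A :|: F)).
  apply: eq_bigl => F; rewrite looplessE finset.subsetUl andbT.
  apply/andP/idP => [[h1 /eqP h2]|h].
    rewrite -h2; apply/subsetP => x /setDP [xAF xA].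
    by rewrite finset.in_setD xA /= (subsetP h1).
  split.
    by rewrite finset.subUset AO (fintype.subset_trans h) ?finset.subsetDl.
  apply/eqP/setP => x; rewrite !inE.
  case xF: (x \in F); last by rewrite orbF andNb.
  by have /setDP[_ xnA] := subsetP h x xF; rewrite orbT andbT.
have cardAF (F : {set 'I_n * 'I_n}) : F \subset offdiag n :\: A -> #|A :|: F| = (#|A| + #|F|)%N.
  move=> h; rewrite -cardsUI.
  suff -> : A :&: F = finset.set0 by rewrite cards0 addn0.
  apply/setP => x; rewrite !inE; case xA: (x \in A) => //=.
  by apply/negP => xF; have := subsetP h x xF; rewrite !inE xA.
have cardD : #|offdiag n :\: A| = (n * n.-1 - #|A|)%N.
  by rewrite cardsD (finset.setIidPr AO) card_offdiag.
rewrite (eq_bigr (fun F : {set 'I_n * 'I_n} => q ^+ #|A| *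
    (q ^+ #|F| * (1 - q) ^+ (#|offdiag n :\: A| - #|F|)))); last first.
  by move=> F h; rewrite /arc_weight cardAF // exprD cardD subnDA mulrA.
by rewrite -mulr_sumr sum_subset_binom addrCA subrr addr0 expr1n mulr1.
Qed.

Lemma Dnp_probC (Q : {set 'I_n * 'I_n} -> Prop) :
  Dnp_prob n q Q = 1 - \sum_(E | loopless E && ~~ `[< Q E >]) arc_weight E.
Proof.
have total : \sum_(E | loopless E) arc_weight E = 1.
  have := @sum_arc_weight_supset finset.set0 (finset.sub0set (offdiag n)).
  rewrite cards0 expr0 => <-; apply: eq_bigl => E.
  by rewrite finset.sub0set andbT.
rewrite (bigID (fun E => `[< Q E >])) /= in total.
by rewrite -total addrK.
Qed.

End ArcWeight.


Section Cherries.
Variables (n : nat) (T : {set 'I_n * 'I_n}) (S : {set 'I_n}).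

Definition cherries (E : {set 'I_n * 'I_n}) : {set ('I_n * 'I_n) * 'I_n} :=
  [set az : ('I_n * 'I_n) * 'I_n |
     [&& az.1 \in T, az.2 \in S, (az.1.1, az.2) \in E & (az.2, az.1.2) \in E]].

Definition cherry_arcs (K : {set ('I_n * 'I_n) * 'I_n}) : {set 'I_n * 'I_n} :=
  [set (az.1.1, az.2) | az in K] :|: [set (az.2, az.1.2) | az in K].

Lemma cherry_arcs_subset (E : {set 'I_n * 'I_n}) (K : {set ('I_n * 'I_n) * 'I_n}) :
  K \subset finset.setX T S ->
  (K \subset cherries E) = (cherry_arcs K \subset E).
Proof.
move=> KX; apply/idP/idP => H.
  apply/subsetP => b; rewrite finset.in_setU => /orP[] /imsetP[az azK ->];
  by have := subsetP H az azK; rewrite inE => /and4P[].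
apply/subsetP => -[b z] azK; rewrite inE.
have := subsetP KX _ azK; rewrite finset.in_setX => /andP[-> ->] /=.
rewrite !(subsetP H) // finset.in_setU; apply/orP; [right|left];
  by apply/imsetP; exists (b, z).
Qed.

Hypothesis T_outside_S : forall a, a \in T -> a.1 \notin S /\ a.2 \notin S.
Hypothesis T_outdeg_le1 : forall x : 'I_n, (#|[set a in T | a.1 == x]| <= 1)%N.
Hypothesis T_indeg_le1 : forall y : 'I_n, (#|[set a in T | a.2 == y]| <= 1)%N.

Lemma cherry_arcs_offdiag (K : {set ('I_n * 'I_n) * 'I_n}) :
  K \subset finset.setX T S -> cherry_arcs K \subset offdiag n.
Proof.
move=> KX; apply/subsetP => b.
rewrite finset.in_setU => /orP[] /imsetP[[c z] azK ->];
  have := subsetP KX _ azK; rewrite finset.in_setX => /andP[/T_outside_S [h1 h2] h3];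
  rewrite inE /=; apply/negP => /eqP e.
  by move: h1; rewrite e h3.
by move: h2; rewrite -e h3.
Qed.

(* The two arcs x -> z and z -> y of a cherry determine it because T has
   in- and out-degrees at most one and its endpoints avoid S. *)
Lemma card_cherry_arcs (K : {set ('I_n * 'I_n) * 'I_n}) :
  K \subset finset.setX T S -> #|cherry_arcs K| = (2 * #|K|)%N.
Proof.
move=> KX.
have mem az : az \in K ->
    [/\ az.1 \in T, az.2 \in S, az.1.1 \notin S & az.1.2 \notin S].
  case: az => b z azK; have := subsetP KX _ azK; rewrite finset.in_setX => /andP[h1 h2].
  by have [h3 h4] := T_outside_S h1; split.
rewrite /cherry_arcs cardsU.
have -> : [set (az.1.1, az.2) | az in K] :&: [set (az.2, az.1.2) | az in K]
          = finset.set0.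
  apply/setP => b; rewrite !inE.
  apply/negP => /andP[/imsetP[a aK ->] /imsetP[c cK [e1 e2]]].
  have [_ h _ _] := mem c cK; have [_ _ h' _] := mem a aK.
  by move: h'; rewrite e1 h.
rewrite cards0 subn0 !card_in_imset ?mul2n ?addnn //.
  move=> [[a1 a2] a3] [[c1 c2] c3] aK cK /= [e1 e2]; subst.
  have [hc _ _ _] := mem _ cK; have [ha _ _ _] := mem _ aK.
  have /card_le1_eqP/(_ (a1, c2) (c1, c2)) := T_indeg_le1 c2.
  by rewrite !inE /= ha hc !eqxx => /(_ isT isT) [->].
move=> [[a1 a2] a3] [[c1 c2] c3] aK cK /= [e1 e2]; subst.
have [hc _ _ _] := mem _ cK; have [ha _ _ _] := mem _ aK.
have /card_le1_eqP/(_ (c1, a2) (c1, c2)) := T_outdeg_le1 c1.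
by rewrite !inE /= ha hc !eqxx => /(_ isT isT) [->].
Qed.

(* First moment over the k-subsets K of T x S: each K is contained in the
   cherries of E exactly when the 2k distinct arcs of K are arcs of E. *)
Lemma cherries_tail_bound (R : realType) (q : R) (k : nat) : 0 <= q <= 1 ->
  \sum_(E | loopless E && (k <= #|cherries E|)%N) arc_weight q E
    <= 'C(#|T| * #|S|, k)%:R * q ^+ (2 * k).
Proof.
move=> hq.
pose ksubsets (A : {set ('I_n * 'I_n) * 'I_n}) :=
  [set K : {set ('I_n * 'I_n) * 'I_n} | K \subset A & #|K| == k].
apply: (le_trans (y := \sum_(E | loopless E)
   \sum_(K in ksubsets (cherries E)) arc_weight q E)).
  apply: sum_le_subpred => [E /andP[] //| E /andP[_ hk] | E _]; last first.
    by apply: sumr_ge0 => K _; exact: arc_weight_ge0.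
  rewrite sumr_const cards_draws -mulr_natr.
  by rewrite -[X in X <= _]mulr1 ler_wpM2l ?arc_weight_ge0 // (ler_nat _ 1) bin_gt0.
rewrite (exchange_big_dep (mem (ksubsets (finset.setX T S)))) /=; last first.
  move=> E K _; rewrite !inE => /andP[h ->]; rewrite andbT.
  apply: (fintype.subset_trans h).
  by apply/subsetP => -[b z]; rewrite inE finset.in_setX => /and4P[-> ->].
rewrite (eq_bigr (fun _ => q ^+ (2 * k))); last first.
  move=> K; rewrite inE => /andP[KX /eqP Kk].
  rewrite (eq_bigl (fun E => loopless E && (cherry_arcs K \subset E))); last first.
    by move=> E; rewrite inE cherry_arcs_subset // Kk eqxx andbT.
  by rewrite sum_arc_weight_supset ?card_cherry_arcs ?Kk ?cherry_arcs_offdiag.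
by rewrite sumr_const cards_draws cardsX mulr_natl.
Qed.

End Cherries.


Section ThresholdBounds.
Variables (R : realType) (beta q : R) (s n : nat).
Hypothesis beta_gt0 : 0 < beta.

(* Every arc set violating the bound of the theorem for (S,T) has at least
   k cherries. *)
Let k := Num.truncn (beta * s%:R * q ^+ 2 * n%:R).

Lemma binom_sq_tail_le (alpha : R) : 0 < alpha -> 0 <= q ->
  s%:R <= alpha * n%:R ->
  'C(s * s, k)%:R * q ^+ (2 * k) <= 3 * (3 * alpha / beta) ^+ k.
Proof.
move=> a0 q0 hs.
set t := beta * s%:R * q ^+ 2 * n%:R.
have ab0 : 0 <= alpha / beta by rewrite divr_ge0 // ltW.
have hf : (0 : R) < (k`!)%:R by rewrite ltr0n fact_gt0.
have sq_le : s%:R * s%:R * q ^+ 2 <= alpha / beta * k.+1%:R.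
  apply: (le_trans (y := alpha / beta * t)).
    have -> : alpha / beta * t = alpha * n%:R * s%:R * q ^+ 2.
      by rewrite /t; field; rewrite gt_eqF.
    apply: ler_wpM2r; first exact: exprn_ge0.
    by rewrite [X in X <= _]mulrC; apply: ler_wpM2r.
  exact/ler_wpM2l/ltW/truncnS_gt.
apply: (le_trans (y := (s * s)%:R ^+ k / (k`!)%:R * q ^+ (2 * k))).
  by apply: ler_wpM2r; rewrite ?exprn_ge0 ?bin_le_expr_fact.
rewrite mulrAC exprM natrM -exprMn.
apply: (le_trans (y := (alpha / beta * k.+1%:R) ^+ k / (k`!)%:R)).
  apply: ler_wpM2r; first by rewrite invr_ge0 ltW.
  by apply: lerXn2r sq_le; rewrite nnegrE; repeat apply: mulr_ge0 => //.
rewrite exprMn -[(alpha / beta) ^+ k * _ / _]mulrA.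
apply: (le_trans (y := (alpha / beta) ^+ k * 3 ^+ k.+1)).
  by apply: ler_wpM2l; rewrite ?exprn_ge0 // ler_pdivrMr // natrS_expr_le_fact.
by rewrite exprS mulrCA; apply: ler_wpM2l; rewrite // -exprMn mulrC mulrA.
Qed.

Lemma geometric_threshold_le (c M : R) : 0 < c -> c < 1 ->
  6 <= beta * M ^+ 2 * (- ln c) -> (0 < n)%N ->
  M ^+ 2 * ln (n%:R : R) <= q ^+ 2 * n%:R ->
  c ^+ k <= c^-1 * (n%:R ^+ (6 * s))^-1.
Proof.
move=> c0 c1 hM n0 hq.
set L := - ln c.
have L0 : 0 < L by rewrite /L oppr_gt0 ln_lt0 // c0 c1.
have hn : (0 : R) < n%:R by rewrite ltr0n.
have lnn0 : 0 <= ln (n%:R : R) by rewrite ln_ge0 // ler1n.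
set t := beta * s%:R * q ^+ 2 * n%:R.
have Ec : c = expR (ln c) by rewrite lnK // posrE.
have En : (n%:R : R) = expR (ln n%:R) by rewrite lnK // posrE.
rewrite {1}Ec -expRM_natl.
rewrite [X in X^-1]Ec -expRN En -expRM_natl -expRN -expRD ler_expR.
have h1 : t * L <= k.+1%:R * L.
  by apply: ler_wpM2r; apply: ltW; rewrite ?truncnS_gt.
have h2 : beta * s%:R * (M ^+ 2 * ln n%:R) <= t.
  have -> : t = beta * s%:R * (q ^+ 2 * n%:R) by rewrite /t; ring.
  by apply: ler_wpM2l; rewrite ?mulr_ge0 // ltW.
have h3 : 6 * (s%:R * ln (n%:R : R)) <= beta * M ^+ 2 * L * (s%:R * ln n%:R).
  by apply: ler_wpM2r; rewrite ?mulr_ge0.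
have h4 : beta * M ^+ 2 * L * (s%:R * ln (n%:R : R))
          = (beta * s%:R * (M ^+ 2 * ln n%:R)) * L by ring.
have h5 : (beta * s%:R * (M ^+ 2 * ln (n%:R : R))) * L <= t * L.
  by apply: ler_wpM2r => //; apply: ltW.
rewrite natrM -natr1 /L in h1 h3 h4 h5 *.
set x := ln c in h1 h3 h4 h5 *; set y := ln (n%:R : R) in h1 h3 h4 h5 *.
nra.
Qed.

End ThresholdBounds.


(* For fixed S of size s >= 1 there are at most n^(2s) sets T, and
   n^(-4s) <= n^(-2) n^(-s); summing over S then gives n^(-2) (1 + 1/n)^n. *)
Lemma sum_inv_expn_pairs_le (R : realType) (n : nat) : (0 < n)%N ->
  \sum_(ST : {set 'I_n} * {set 'I_n * 'I_n} |
          (ST.1 != finset.set0) && (#|ST.2| == #|ST.1|))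
     ((n%:R : R) ^+ (6 * #|ST.1|))^-1 <= 3 * ((n%:R : R) ^+ 2)^-1.
Proof.
move=> n0.
set N : R := n%:R; have N0 : 0 < N by rewrite ltr0n.
set r := N^-1; have r0 : 0 < r by rewrite invr_gt0.
have r1 : r <= 1 by rewrite invf_le1 // ler1n.
rewrite -(pair_big_dep (fun S : {set 'I_n} => S != finset.set0)
  (fun S (T : {set 'I_n * 'I_n}) => #|T| == #|S|) (fun S T => (N ^+ (6 * #|S|))^-1)) /=.
apply: (le_trans (y := \sum_(S : {set 'I_n}) r ^+ 2 * r ^+ #|S|)).
  apply: sum_le_subpred => // S SN; last by rewrite mulr_ge0 // exprn_ge0 // ltW.
  rewrite (eq_bigl (mem [set T : {set 'I_n * 'I_n} | #|T| == #|S|])); last first.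
    by move=> T; rewrite !inE.
  rewrite sumr_const card_draws card_prod card_ord -mulr_natr.
  set s := #|S|; have s0 : (0 < s)%N by rewrite card_gt0.
  have hC : ('C(n * n, s)%:R : R) <= (N ^+ 2) ^+ s.
    apply: (le_trans (bin_le_expr_fact R (n * n) s)).
    rewrite natrM -expr2 ler_pdivrMr ?ltr0n ?fact_gt0 //.
    by rewrite ler_peMr ?exprn_ge0 // ler1n fact_gt0.
  apply: (le_trans (y := (N ^+ (6 * s))^-1 * (N ^+ 2) ^+ s)).
    by apply: ler_wpM2l hC; rewrite invr_ge0 exprn_ge0 // ltW.
  have -> : (N ^+ (6 * s))^-1 * (N ^+ 2) ^+ s = r ^+ (4 * s).
    rewrite -exprM /r exprVn (_ : 6 * s = 4 * s + 2 * s)%N; last by lia.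
    by rewrite exprD invfM -mulrA mulVf ?mulr1 ?expf_neq0 ?gt_eqF.
  by rewrite -exprD; apply: ler_wiXn2l; [exact: ltW | exact: r1 | lia].
rewrite -mulr_sumr.
have := @sum_subset_binom R _ [set: 'I_n] r 1; rewrite cardsT card_ord => hb.
have -> : \sum_(S : {set 'I_n}) r ^+ #|S| = (r + 1) ^+ n.
  rewrite -hb; apply: eq_big => S; first by rewrite finset.subsetT.
  by rewrite expr1n mulr1.
rewrite mulrC exprVn; apply: ler_wpM2r; first by rewrite invr_ge0 exprn_ge0 // ltW.
by rewrite addrC expr_1Dinv_le3.
Qed.

Section UnionBound.
Variables (R : realType) (alpha beta q : R) (n : nat).
Hypothesis alpha_gt0 : 0 < alpha.
Hypothesis beta_gt0 : 0 < beta.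
Hypothesis q_prob : 0 <= q <= 1.

Definition deg1_arcs_avoiding (S : {set 'I_n}) (T : {set 'I_n * 'I_n}) : Prop :=
  [/\ forall a, a \in T -> [/\ a.1 \notin S, a.2 \notin S & a.1 != a.2],
      forall x : 'I_n, (#|[set a in T | a.1 == x]| <= 1)%N &
      forall y : 'I_n, (#|[set a in T | a.2 == y]| <= 1)%N].

Definition admissible (ST : {set 'I_n} * {set 'I_n * 'I_n}) : Prop :=
  [/\ ST.1 != finset.set0, #|ST.1|%:R <= alpha * n%:R, #|ST.2| = #|ST.1|
     & deg1_arcs_avoiding ST.1 ST.2].

Let threshold (ST : {set 'I_n} * {set 'I_n * 'I_n}) : nat :=
  Num.truncn (beta * #|ST.1|%:R * q ^+ 2 * n%:R).

Lemma bad_arcsets_union_bound :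
  \sum_(E | loopless E && ~~ `[< lemma4p3_prop alpha beta q n E >]) arc_weight q E <=
  \sum_(ST | `[< admissible ST >])
     \sum_(E | loopless E && (threshold ST <= #|cherries ST.2 ST.1 E|)%N) arc_weight q E.
Proof.
pose witness E ST := `[< admissible ST >] && (threshold ST <= #|cherries ST.2 ST.1 E|)%N.
apply: (le_trans (y := \sum_(E | loopless E) \sum_(ST | witness E ST) arc_weight q E)).
  apply: sum_le_subpred => [E /andP[] //| E /andP[lE bad] | E _]; last first.
    by apply: sumr_ge0 => ST _; exact: arc_weight_ge0.
  have [ST wST] : exists ST, witness E ST.
    apply: contrapT => no_witness; move/asboolPn: bad.
    apply=> S T S0 S_le T_card T_out T_outdeg T_indeg.
    rewrite ltNge; apply/negP => hc; apply: no_witness; exists (S, T).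
    rewrite /witness asboolT; last by [].
    by have := le_truncn hc; rewrite natrK.
  rewrite (bigD1 ST) //= lerDl.
  by apply: sumr_ge0 => ST' _; exact: arc_weight_ge0.
rewrite (exchange_big_dep (fun ST => `[< admissible ST >])) /=; last first.
  by move=> E ST _ /andP[].
apply: ler_sum => ST _; apply: sum_le_subpred => [E /andP[-> /andP[_ ->]] //|//|E _].
exact: arc_weight_ge0.
Qed.

Lemma bad_arcsets_weight_le (M : R) : 3 * alpha < beta ->
  6 <= beta * M ^+ 2 * (- ln (3 * alpha / beta)) -> (0 < n)%N ->
  M ^+ 2 * ln (n%:R : R) <= q ^+ 2 * n%:R ->
  \sum_(E | loopless E && ~~ `[< lemma4p3_prop alpha beta q n E >]) arc_weight q E
   <= 9 * (3 * alpha / beta)^-1 * ((n%:R : R) ^+ 2)^-1.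
Proof.
move=> ab hM n0 hqn.
set c := 3 * alpha / beta.
have c0 : 0 < c by rewrite divr_gt0 // mulr_gt0.
have c1 : c < 1 by rewrite ltr_pdivrMr // mul1r.
apply: (le_trans bad_arcsets_union_bound).
apply: (le_trans (y := \sum_(ST : {set 'I_n} * {set 'I_n * 'I_n} |
   (ST.1 != finset.set0) && (#|ST.2| == #|ST.1|))
     3 * c^-1 * ((n%:R : R) ^+ (6 * #|ST.1|))^-1)).
  apply: sum_le_subpred => [ST /asboolP [-> _ -> _]|ST /asboolP adm|ST _].
  - exact: eqxx.
  - case: adm => _ s_le T_card [T_out T_outdeg T_indeg].
    have T_outside_S a : a \in ST.2 -> a.1 \notin ST.1 /\ a.2 \notin ST.1.
      by case/T_out.
    apply: (le_trans (cherries_tail_bound T_outside_S T_outdeg T_indeg _ q_prob)).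
    have q0 : 0 <= q by case/andP: q_prob.
    rewrite T_card; apply: (le_trans (binom_sq_tail_le beta_gt0 alpha_gt0 q0 s_le)).
    rewrite -/c -[3 * c^-1 * _]mulrA; apply: ler_wpM2l => //.
    exact: (geometric_threshold_le #|ST.1| beta_gt0 c0 c1 hM n0 hqn).
  - by rewrite !mulr_ge0 ?invr_ge0 ?exprn_ge0 // ltW.
have -> : 9 * c^-1 * ((n%:R : R) ^+ 2)^-1 = 3 * c^-1 * (3 * (n%:R ^+ 2)^-1).
  by ring.
rewrite -mulr_sumr; apply: ler_wpM2l; last exact: sum_inv_expn_pairs_le.
by rewrite mulr_ge0 // invr_ge0 ltW.
Qed.

End UnionBound.


Lemma sqr_ln_le_of_sqrt_le (R : realType) (M p : R) (n : nat) : (0 < n)%N ->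
  0 < M -> 0 <= p -> M * Num.sqrt (ln (n%:R : R) / n%:R) <= p ->
  M ^+ 2 * ln (n%:R : R) <= p ^+ 2 * n%:R.
Proof.
move=> n0 M0 p0 hp.
have hn : (0 : R) < n%:R by rewrite ltr0n.
have hl : 0 <= ln (n%:R : R) / n%:R by rewrite divr_ge0 // ln_ge0 // ler1n.
have : (M * Num.sqrt (ln (n%:R : R) / n%:R)) ^+ 2 <= p ^+ 2.
  by apply: lerXn2r hp; rewrite nnegrE // mulr_ge0 ?sqrtr_ge0 // ltW.
by rewrite exprMn sqr_sqrtr // mulrA ler_pdivrMr.
Qed.

Lemma ler_mul_sqr_1Ddiv (R : realFieldType) (a b : R) : 0 < a -> 0 <= b ->
  b <= a * (1 + b / a) ^+ 2.
Proof.
move=> a0 b0; have bd0 : 0 <= b * (b / a) by rewrite mulr_ge0 ?divr_ge0 // ltW.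
have -> : a * (1 + b / a) ^+ 2 = a + 2 * b + b * (b / a) by field; rewrite gt_eqF.
lra.
Qed.

Lemma inv_sqrn_le_2harmonic (R : realFieldType) (n : nat) : (0 < n)%N ->
  ((n%:R : R) ^+ 2)^-1 <= 2 * harmonic n.
Proof.
move=> n0; rewrite /harmonic -natr1; set x : R := n%:R.
have x1 : 1 <= x by rewrite ler1n.
rewrite -[2 * _]invf_div lef_pV2 ?posrE ?exprn_gt0 ?divr_gt0 ?(lt_le_trans ltr01) //.
  by rewrite ler_pdivrMr //; nra.
all: by rewrite ler1n.
Qed.

Local Open Scope classical_set_scope.

Lemma cvg_to_1_harmonic (R : realType) (f : nat -> R) (K : R) (N : nat) :
  (forall n, (N <= n)%N -> 1 - K * harmonic n <= f n <= 1) ->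
  f @ \oo --> (1 : R).
Proof.
move=> hf; apply: (@squeeze_cvgr _ _ _ _ (fun n => 1 - K * harmonic n) (fun _ => 1)).
- by exists N.
- have := cvgB (cvg_cst (1 : R)) (cvgMl_tmp (a := K) (@cvg_harmonic R)).
  by move=> /(_ _ _ _); rewrite mulr0 subr0.
- exact: cvg_cst.
Qed.

Theorem lemma4p3 (R : realType) (alpha beta : R) (p : nat -> R) :
  0 < alpha -> 0 < beta -> 3 * alpha < beta ->
  (forall n, 0 <= p n <= 1) ->
  (forall M : R, 0 < M ->
     exists N : nat, forall n : nat, (N <= n)%N ->
       M * Num.sqrt (ln (n%:R : R) / n%:R) <= p n) ->
  (fun n : nat => Dnp_prob n (p n) (lemma4p3_prop alpha beta (p n) n)) @ \oo --> (1 : R).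
Proof.
move=> a0 b0 ab hp hM.
set c := 3 * alpha / beta.
have c0 : 0 < c by rewrite divr_gt0 // mulr_gt0.
have lnc0 : 0 < - ln c by rewrite oppr_gt0 ln_lt0 // c0 ltr_pdivrMr // mul1r.
set M := 1 + 6 / (beta * - ln c).
have M0 : 0 < M by rewrite ltr_pwDl // divr_ge0 // ltW // mulr_gt0.
have hML : 6 <= beta * M ^+ 2 * - ln c.
  by rewrite mulrAC ler_mul_sqr_1Ddiv // mulr_gt0.
have [N hN] := hM M M0.
apply: (@cvg_to_1_harmonic R _ (18 * c^-1) (maxn N 1)) => n.
rewrite geq_max => /andP[Nn n0]; have p01 := hp n.
have p0 : 0 <= p n by case/andP: p01.
have hpn := sqr_ln_le_of_sqrt_le n0 M0 p0 (hN n Nn).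
have bad := bad_arcsets_weight_le a0 b0 p01 ab hML n0 hpn.
rewrite Dnp_probC lerD2l lerN2 gerBl sumr_ge0 ?andbT; last first.
  by move=> E _; exact: arc_weight_ge0.
apply: (le_trans bad).
have -> : 18 * c^-1 * harmonic n = 9 * c^-1 * (2 * harmonic n) by ring.
apply: ler_wpM2l; last exact: inv_sqrn_le_2harmonic.
by rewrite mulr_ge0 // invr_ge0 ltW.
Qed.
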